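(* Consider a \textsc{Brick+} payment channel, as described in the context, under its system model. Then \textsc{Brick+} achieves safety under asynchrony: the channel can only close in the freshest committed state.
   Context: Setting and model. Two channel parties $A,B$, a committee of Wardens $W_1,\dots,W_n$ with $n=3f+1$, at most $f$ Byzantine and the others honest (at least $2f+1$ honest), threshold $t=2f+1$, and an external auditor. Participants are computationally bounded; communication channels are secure, the hash function $H$ is cryptographically secure, signatures unforgeable. The blockchain supports smart contracts and satisfies persistence and liveness. The network is asynchronous (every message between honest parties is eventually delivered, no known bound). The richest channel party is rational and will not deviate from honest behavior if it would be discovered and punished; the auditor is rational and does not punish without proof. States have sequence numbers $1,2,\dots$; $s_i$ is the state with sequence number $i$; $\sigma(\cdot)$ is the joint signature of $A$ and $B$. Protocol \textsc{Brick+} (a modification of \textsc{Brick}). Open: parties sign and publish $open(H(W_1),\dots,H(W_n),t,s_1,F)$; Wardens lock collateral. Update: given the previous hash-chain head $H_p$, the parties sign and exchange $H_s=H(H_p,H(s_i,r_i),i)$ with random $r_i$, forming the announcement $\{M,\sigma(M),H_s\}$ with $M=i$. Consistent Broadcast: each party sends the announcement to all Wardens; a Warden checks both signatures and that the sequence number is exactly one higher than stored; if it has already published a closing announcement it ignores the update, otherwise stores the announcement (sequence number and hash-chain head), signs $M$ and returns the signature; a party considers the state committed once it holds $t$ Warden signatures. Closing by mutual agreement without the committee (Optimistic Close) is disabled. Pessimistic Close: a party (or the Wardens on a valid audit request) triggers each Warden to publish on-chain its signed stored announcement with a close flag and stop signing updates; once $t$ are on-chain, the party publishes the state $s_i$ with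 the maximum announced sequence number $i$, $r_i$ and the parties' signatures; the smart contract verifies these and closes the channel in $s_i$. Audit: the auditor posts an access request on-chain; Wardens verify it and run Pessimistic Close; both parties send the state history to the auditor, who recomputes the hash chain and compares it to the head for the maximum sequence number published by the Wardens, pursuing external punishment on mismatch or non-response. Definitions. A state $s_i$ is valid if both parties have signed it, it is the freshest (no valid $s_{i+1}$), and the committee has not invalidated it (it is invalidated if the channel closes in $s_{i-1}$). A state is committed if signed by at least $2f+1$ Wardens, or valid and in a block in the persistent part of the blockchain. Safety: the channel will only close in the freshest committed state. *)

From mathcomp Require Import all_boot.
Set Implicit Arguments. Unset Strict Implicit. Unset Printing Implicit Defensive.

(* States are identified by their sequence numbers;
   K is the largest sequence number of a state jointly signed by A and B
   (states 1..K carry the joint signature sigma; s_1 is signed at Open). *)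

(* Local actions of a Warden that are observable by others:
   WSign i  : the Warden stores the announcement with sequence number i and
              returns its signature on M = i;
   WClose j : the Warden publishes on-chain its stored announcement (sequence
              number j) with the close flag. *)
Inductive wevent := WSign of nat | WClose of nat.

Definition is_sign (i : nat) (e : wevent) : bool :=
  if e is WSign j then j == i else false.
Definition is_close (j : nat) (e : wevent) : bool :=
  if e is WClose j' then j' == j else false.

(* Honest Warden behaviour (Consistent Broadcast + Pessimistic Close of Brick+):
   st = stored sequence number, closed = already published a closing announcement.
   - an update i is accepted (stored and signed) only if it carries the parties'
     joint signature (i <= K), its sequence number is exactly st+1, and the
     Warden has not yet published a closing announcement;
   - a closing announcement publishes the stored announcement, after which the
     Warden signs no more updates (and publishes only once). *)
Fixpoint honest_run (K st : nat) (closed : bool) (tr : seq wevent) : bool :=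
  match tr with
  | [::] => true
  | WSign i :: tr' => [&& ~~ closed, i == st.+1, i <= K & honest_run K i false tr']
  | WClose j :: tr' => [&& ~~ closed, j == st & honest_run K st true tr']
  end.

Definition signers (f : nat) (byz : {set 'I_(3*f+1)})
    (tr : 'I_(3*f+1) -> seq wevent) (byzsig : 'I_(3*f+1) -> nat -> bool) (i : nat)
    : {set 'I_(3*f+1)} :=
  [set w | if w \in byz then byzsig w i else has (is_sign i) (tr w)].

Definition committed (f : nat) (byz : {set 'I_(3*f+1)})
    (tr : 'I_(3*f+1) -> seq wevent) (byzsig : 'I_(3*f+1) -> nat -> bool) (i : nat) : Prop :=
  (2 * f + 1 <= #|signers byz tr byzsig i|)%N.

(* On-chain closing announcements (warden, announced sequence number), in chain order. *)
Definition publishers (f : nat) (p : seq ('I_(3*f+1) * nat)) : {set 'I_(3*f+1)} :=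
  [set w | has (fun x => x.1 == w) p].

(* The smart contract closes the channel as soon as t = 2f+1 distinct Wardens have
   published: the prefix take k chain is the first one with t publishers. *)
Definition closes_at (f : nat) (chain : seq ('I_(3*f+1) * nat)) (k : nat) : Prop :=
  (k <= size chain)%N /\ (2 * f + 1 <= #|publishers (take k chain)|)%N /\
  (forall k', (k' < k)%N -> (#|publishers (take k' chain)| < 2 * f + 1)%N).

(* Sequence number of the state the channel closes in: the maximum announced one. *)
Definition close_seq (f : nat) (chain : seq ('I_(3*f+1) * nat)) (k : nat) : nat :=
  \max_(x <- take k chain) x.2.

(* An honest Warden signs sequence numbers in increasing order and, once it
   publishes its closing announcement, never signs again; so every number it
   signed is at most the one it publishes.  A committed state has 2f+1 signers
   and the contract closes only after 2f+1 Wardens published; in a committee of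
   3f+1 with at most f Byzantine members these two quorums share an honest
   Warden, whose published number bounds the committed one and is itself
   bounded by the closing sequence number, the maximum of all published ones. *)
From mathcomp Require Import all_boot.
From mathcomp Require Import zify.

Set Implicit Arguments.
Unset Strict Implicit.
Unset Printing Implicit Defensive.

Lemma quorum_intersection (T : finType) (A B C : {set T}) :
  (#|T| + #|C| < #|A| + #|B|)%N -> exists2 w, w \in A :&: B & w \notin C.
Proof.
move=> Hcard; have [/subset_leq_card Hsub|/subsetPn [w Hw HwC]] :=
  boolP (A :&: B \subset C); last by exists w.
have := cardsUI A B; have := max_card (A :|: B); lia.
Qed.

Section HonestRun.

Variable K : nat.

Lemma honest_run_closed st tr : honest_run K st true tr -> tr = [::].
Proof. by case: tr => [|[i|j] tr]. Qed.

Lemma honest_run_stored_le_close j tr st c :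
  honest_run K st c tr -> has (is_close j) tr -> (st <= j)%N.
Proof.
elim: tr st c => [|[i|j'] tr IH] st c //=.
- by case/and4P => _ /eqP -> _ /IH Hrun /Hrun; apply: leq_trans.
- by case/and3P => _ /eqP -> /honest_run_closed -> /orP [/eqP -> |].
Qed.

Lemma honest_run_sign_le_close i j tr st c :
  honest_run K st c tr -> has (is_close j) tr -> has (is_sign i) tr ->
  (i <= j)%N.
Proof.
elim: tr st c => [|[i'|j'] tr IH] st c //=.
- case/and4P => _ _ _ Hrun Hclose /orP [/eqP <- | Hsign].
    exact: honest_run_stored_le_close Hrun Hclose.
  exact: IH Hrun Hclose Hsign.
- by case/and3P => _ _ /honest_run_closed ->.
Qed.

End HonestRun.

Lemma publishersP f (s : seq ('I_(3*f+1) * nat)) w :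
  reflect (exists2 x, x \in s & x.1 = w) (w \in publishers s).
Proof. by rewrite inE; apply: (iffP hasP) => -[x Hx /eqP]; exists x. Qed.

Section CloseSeq.

Variables (f : nat) (chain : seq ('I_(3*f+1) * nat)) (k : nat).

Lemma leq_close_seq x : x \in take k chain -> (x.2 <= close_seq chain k)%N.
Proof. by move=> Hx; exact: (leq_bigmax_seq (F := fun x => x.2) x Hx). Qed.

Lemma close_seq_leq m :
  (forall x, x \in take k chain -> x.2 <= m)%N -> (close_seq chain k <= m)%N.
Proof. by move=> Hm; apply/bigmax_leqP_seq => x Hx _; apply: Hm. Qed.

End CloseSeq.

Theorem theorem3 (f K : nat) (byz : {set 'I_(3*f+1)})
    (tr : 'I_(3*f+1) -> seq wevent) (byzsig : 'I_(3*f+1) -> nat -> bool)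
    (chain : seq ('I_(3*f+1) * nat)) (k : nat) :
  (1 <= K)%N ->
  (#|byz| <= f)%N ->
  (forall w, w \notin byz -> honest_run K 1 false (tr w)) ->
  (forall x, x \in chain -> x.1 \notin byz -> has (is_close x.2) (tr x.1)) ->
  (forall x, x \in chain -> (1 <= x.2 <= K)%N) ->
  closes_at chain k ->
  (forall i, committed byz tr byzsig i -> (i <= close_seq chain k)%N) /\
  (1 <= close_seq chain k <= K)%N.
Proof.
move=> _ Hbyz Hhonest Hclose Hrange [_ [Hquorum _]].
have Hrange_take x : x \in take k chain -> (1 <= x.2 <= K)%N.
  by move/mem_take; apply: Hrange.
split=> [i Hcommitted|].
- have [w /setIP [Hsigned Hpublished] Hw] :
      exists2 w, w \in signers byz tr byzsig i :&: publishers (take k chain)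
               & w \notin byz.
    apply: quorum_intersection; rewrite card_ord.
    by move: Hcommitted; rewrite /committed; lia.
  have /publishersP [x Hx Hxw] := Hpublished.
  move: Hsigned; rewrite inE (negbTE Hw) => Hsigned.
  have Hxclose : has (is_close x.2) (tr w).
    by rewrite -Hxw; apply: Hclose (mem_take Hx) _; rewrite Hxw.
  apply: leq_trans (leq_close_seq Hx).
  exact: honest_run_sign_le_close (Hhonest w Hw) Hxclose Hsigned.
- have [w Hw] : exists w, w \in publishers (take k chain).
    by apply/set0Pn; rewrite -card_gt0; lia.
  have /publishersP [x Hx _] := Hw.
  rewrite (leq_trans _ (leq_close_seq Hx)) ?close_seq_leq //.
  + by move=> y /Hrange_take /andP [].
  + by case/andP: (Hrange_take x Hx).
Qed.
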